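(* Let $d\ge2$ be an integer and $(p_{nm})_{n,m\in\{0,\dots,d-1\}}$ a probability vector with $p_{0m}=0$ for all $m\in\{1,\dots,d-1\}$. Let the initial shared state be $\sum_{n,m}p_{nm}|\Phi^{n,m}\rangle\langle\Phi^{n,m}|$ (fidelity $p_{00}$), let $\mathcal{N}$ be the qudit Pauli channel with probabilities $p_{nm}$, and let $F_N$ be the fidelity $\langle\Phi^{0,0}|\rho_N|\Phi^{0,0}\rangle$ after $N$ successful rounds of the single-carrier protocol without adaptive pre-processing. Then $F_N\to1$ as $N\to\infty$ if and only if $$p_{00}>\max_{n\in\{1,\dots,d-1\}}p_{X=n},\qquad p_{X=n}:=\sum_{m=0}^{d-1}p_{nm}.$$
   Context: $\omega=e^{2\pi i/d}$; on $\mathbb{C}^d$, $X|j\rangle=|(j+1)\bmod d\rangle$, $Z|j\rangle=\omega^j|j\rangle$. Bell states $|\Phi^{n,m}\rangle=\frac1{\sqrt d}\sum_{j=0}^{d-1}\omega^{mj}|j,(j+n)\bmod d\rangle$. The qudit Pauli channel is $\mathcal{N}(\rho)=\sum_{n,m}p_{nm}Z^mX^n\rho X^{-n}Z^{-m}$. Single-carrier round: Alice prepares a carrier $T$ in $|0\rangle$ and applies $|j\rangle_A|k\rangle_T\mapsto|j\rangle_A|(j+k)\bmod d\rangle_T$; the carrier passes through $\mathcal{N}$; Bob applies $|j\rangle_B|k\rangle_T\mapsto|j\rangle_B|(k-j)\bmod d\rangle_T$ and measures $T$ in the computational basis; the round succeeds iff the outcome is $0$, and then the shared state is kept. Successive rounds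 act on the kept state, each with a fresh carrier through $\mathcal{N}$. *)

From HB Require Import structures.
From mathcomp Require Import all_boot all_order all_algebra.
From mathcomp Require Import all_classical all_reals all_analysis.
From mathcomp Require Import complex.
Set Implicit Arguments. Unset Strict Implicit. Unset Printing Implicit Defensive.
Import Order.TTheory GRing.Theory Num.Theory.
Local Open Scope ring_scope.

Section QuditProtocol.
Variable R : realType.
Local Notation C := (R[i]).
Variable d : nat.

(* Basis indices are naturals j < d; all kernels vanish outside this range. *)
Definition inr (j : nat) : bool := (j < d)%N.

Definition omega : C := Complex (cos (2 * pi / d%:R)) (sin (2 * pi / d%:R)).

(* single-qudit operators as kernels  <i| A |i0> *)
Definition op1 := nat -> nat -> C.
Definition id1 : op1 := fun i i0 => ((inr i && inr i0 && (i == i0)) : nat)%:R.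
Definition mul1 (A B : op1) : op1 := fun i k => \sum_(j < d) A i j * B j k.
Definition pow1 (A : op1) (n : nat) : op1 := iter n (mul1 A) id1.
Definition adj1 (A : op1) : op1 := fun i i0 => (A i0 i)^*.
Definition Xop : op1 := fun i i0 => ((inr i && inr i0 && (i == (i0 + 1) %% d)%N) : nat)%:R.
Definition Zop : op1 := fun i i0 => ((inr i && inr i0 && (i == i0)) : nat)%:R * omega ^+ i.
Definition pauli (n m : nat) : op1 := mul1 (pow1 Zop m) (pow1 Xop n).

(* two-qudit (A,B) operators: <a b| rho |a' b'> = rho a b a' b' *)
Definition op2 := nat -> nat -> nat -> nat -> C.
(* three-qudit (A,B,T) operators: <a b t| S |a' b' t'> = S a b t a' b' t' *)
Definition op3 := nat -> nat -> nat -> nat -> nat -> nat -> C.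

Definition conj3 (U S : op3) : op3 := fun a b t a' b' t' =>
  \sum_(a0 < d) \sum_(b0 < d) \sum_(t0 < d) \sum_(a1 < d) \sum_(b1 < d) \sum_(t1 < d)
    U a b t a0 b0 t0 * S a0 b0 t0 a1 b1 t1 * (U a' b' t' a1 b1 t1)^*.

Definition gateA : op3 := fun a b t a0 b0 t0 =>
  ((inr a && inr b && inr t && inr a0 && inr b0 && inr t0 &&
    (a == a0) && (b == b0) && (t == (a0 + t0) %% d)%N) : nat)%:R.
(* Bob's gate |j>_B|k>_T -> |j>_B|k-j mod d>_T (identity on A) *)
Definition gateB : op3 := fun a b t a0 b0 t0 =>
  ((inr a && inr b && inr t && inr a0 && inr b0 && inr t0 &&
    (a == a0) && (b == b0) && (t == (t0 + (d - b0)) %% d)%N) : nat)%:R.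
Definition onT (P : op1) : op3 := fun a b t a0 b0 t0 =>
  ((inr a && inr b && inr a0 && inr b0 && (a == a0) && (b == b0)) : nat)%:R * P t t0.

Definition pauli_channelT (p : nat -> nat -> R) (S : op3) : op3 := fun a b t a' b' t' =>
  \sum_(n < d) \sum_(m < d) real_complex R (p n m) * conj3 (onT (pauli n m)) S a b t a' b' t'.

Definition attach0 (rho : op2) : op3 := fun a b t a' b' t' =>
  rho a b a' b' * (((t == 0%N) && (t' == 0%N)) : nat)%:R.

(* unnormalised AB state conditioned on outcome 0 of T in the computational basis *)
Definition project0 (S : op3) : op2 := fun a b a' b' => S a b 0%N a' b' 0%N.
Definition tr2 (rho : op2) : C := \sum_(a < d) \sum_(b < d) rho a b a b.

Definition round (p : nat -> nat -> R) (rho : op2) : op2 :=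
  let tau := project0 (conj3 gateB (pauli_channelT p (conj3 gateA (attach0 rho)))) in
  fun a b a' b' => tau a b a' b' / tr2 tau.

Definition bell (n m : nat) : nat -> nat -> C := fun j k =>
  ((inr j && inr k && (k == (j + n) %% d)%N) : nat)%:R * omega ^+ (m * j)
  / real_complex R (Num.sqrt (d%:R : R)).
Definition bell_proj (n m : nat) : op2 := fun a b a' b' =>
  bell n m a b * (bell n m a' b')^*.

Definition init_state (p : nat -> nat -> R) : op2 := fun a b a' b' =>
  \sum_(n < d) \sum_(m < d) real_complex R (p n m) * bell_proj n m a b a' b'.

Definition state_after (p : nat -> nat -> R) (N : nat) : op2 := iter N (round p) (init_state p).

Definition fidelity (p : nat -> nat -> R) (N : nat) : C :=
  \sum_(a < d) \sum_(b < d) \sum_(a' < d) \sum_(b' < d)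
    (bell 0 0 a b)^* * state_after p N a b a' b' * bell 0 0 a' b'.

Definition pX (p : nat -> nat -> R) (n : nat) : R := \sum_(m < d) p n m.

End QuditProtocol.

From HB Require Import structures.
From mathcomp Require Import all_boot all_order all_algebra.
From mathcomp Require Import all_classical all_reals all_analysis.
From mathcomp Require Import complex.
From mathcomp.algebra_tactics Require Import ring lra.
Import Order.TTheory GRing.Theory Num.Theory.
Import numFieldNormedType.Exports.
Local Open Scope classical_set_scope.
Local Open Scope complex_scope.
Local Open Scope ring_scope.
Set Implicit Arguments.
Unset Strict Implicit.
Unset Printing Implicit Defensive.

(* Every gate, and every Pauli error on the carrier, has a single nonzero entry per
   row, so a successful round acts entrywise on the shared state: <a b|rho|a' b'> is
   kept only through the error X^n with b - a = b' - a' = n (mod d), and then picks up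
   the factor sum_m p_nm ω^((b-b')m).  Hence the diagonal entry with b - a = n is
   multiplied by p_(X=n) and, since p_0m = 0 for m <> 0, the entries <a a|rho|a' a'> are
   multiplied by p_00.  Starting from the Bell-diagonal state, after N rounds these
   entries are p_(X=n)^(N+1) / (d Z_N) and p_00^(N+1) / (d Z_N), with
   Z_N = sum_n p_(X=n)^(N+1), so that F_N = p_00^(N+1) / Z_N where p_(X=0) = p_00.  This
   ratio tends to 1 iff p_00 strictly dominates every other p_(X=n); otherwise it never
   exceeds 1/2. *)

Lemma sum_ord_supp1 {V : nmodType} {n k : nat} {F : 'I_n -> V} (hk : (k < n)%N) :
  (forall j : 'I_n, (j : nat) != k -> F j = 0) -> \sum_(j < n) F j = F (Ordinal hk).
Proof. by move=> F0; rewrite (bigD1 (Ordinal hk)) //= big1 ?addr0. Qed.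

Section Protocol.
Variable R : realType.
Variable d : nat.
Hypothesis d_gt0 : (0 < d)%N.
Local Notation om := (omega R d).

Lemma eq_modnDsub x y n : (x < d)%N -> (y < d)%N -> (n <= d)%N ->
  ((x + (d - n)) %% d == y)%N = (x == (y + n) %% d)%N.
Proof.
move=> xd yd nd.
by rewrite -{1}(modn_small yd) -(eqn_modDr n) -addnA subnK // modnDr modn_small.
Qed.

Lemma eq_modnDr_self a n : (a < d)%N -> (n < d)%N -> (a == (a + n) %% d)%N = (n == 0%N).
Proof.
move=> ad nd.
by rewrite -{1}(modn_small ad) -{1}(addn0 a) eqn_modDl mod0n modn_small // eq_sym.
Qed.

Lemma pow1_XopE n t t0 : (t < d)%N -> (t0 < d)%N ->
  pow1 d (Xop R d) n t t0 = ((t == (t0 + n) %% d)%N : nat)%:R.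
Proof.
elim: n t t0 => [|n IHn] t t0 td t0d.
  by rewrite /pow1 /= /id1 /inr td t0d addn0 modn_small.
have t1d : ((t0 + n) %% d < d)%N by rewrite ltn_pmod.
rewrite /pow1 iterS -/(pow1 _ _ n) /mul1 (sum_ord_supp1 t1d) => [|j jk].
  by rewrite IHn //= eqxx mulr1 /Xop /inr td t1d /= modnDml addn1 addnS.
by rewrite IHn // (negbTE jk) mulr0.
Qed.

Lemma pow1_ZopE m t t0 : (t < d)%N -> (t0 < d)%N ->
  pow1 d (Zop R d) m t t0 = ((t == t0) : nat)%:R * om ^+ (t * m).
Proof.
elim: m t t0 => [|m IHm] t t0 td t0d.
  by rewrite /pow1 /= /id1 /inr td t0d muln0 expr0 mulr1.
rewrite /pow1 iterS -/(pow1 _ _ m) /mul1 (sum_ord_supp1 td) => [|j jt].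
  by rewrite IHm //= /Zop /inr td eqxx /= mul1r mulnS exprD mulrCA.
by rewrite /Zop /inr eq_sym (negbTE jt) !andbF !mul0r.
Qed.

Lemma pauliE n m t t0 : (t < d)%N -> (t0 < d)%N -> (n <= d)%N ->
  pauli R d n m t t0 = if ((t + (d - n)) %% d == t0)%N then om ^+ (t * m) else 0.
Proof.
move=> td t0d nd; rewrite /pauli /mul1 (sum_ord_supp1 td) => [|j jt].
  rewrite pow1_ZopE // pow1_XopE //= eqxx mul1r mulrC eq_modnDsub //.
  by case: ifP; rewrite ?mul1r ?mul0r.
by rewrite pow1_ZopE // eq_sym (negbTE jt) !mul0r.
Qed.

Lemma omega_expr_normal k : om ^+ k * (om ^+ k)^* = 1.
Proof.
have om_normal : om * om^* = 1.
  by apply/eqP; rewrite /omega /=; simpc; rewrite -!expr2 cos2Dsin2 mulrC addNr eqxx.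
by rewrite rmorphXn /= -exprMn om_normal expr1n.
Qed.

Lemma conj3_monomial (S U : op3 R) a b t a' b' t' u0 u1 u2 v0 v1 v2 (c c' : R[i]) :
  (u0 < d)%N -> (u1 < d)%N -> (u2 < d)%N -> (v0 < d)%N -> (v1 < d)%N -> (v2 < d)%N ->
  (forall y0 y1 y2 : 'I_d, U a b t y0 y1 y2 =
     if [&& (y0 == u0 :> nat), (y1 == u1 :> nat) & (y2 == u2 :> nat)] then c else 0) ->
  (forall y0 y1 y2 : 'I_d, U a' b' t' y0 y1 y2 =
     if [&& (y0 == v0 :> nat), (y1 == v1 :> nat) & (y2 == v2 :> nat)] then c' else 0) ->
  conj3 d U S a b t a' b' t' = c * S u0 u1 u2 v0 v1 v2 * c'^*.
Proof.
move=> u0d u1d u2d v0d v1d v2d hU hU'; rewrite /conj3.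
rewrite (sum_ord_supp1 u0d) => [|j /negbTE ju]; last first.
  by do 5!(apply: big1 => ? _); rewrite hU ju !mul0r.
rewrite (sum_ord_supp1 u1d) => [|j /negbTE ju]; last first.
  by do 4!(apply: big1 => ? _); rewrite hU /= eqxx ju !mul0r.
rewrite (sum_ord_supp1 u2d) => [|j /negbTE ju]; last first.
  by do 3!(apply: big1 => ? _); rewrite hU /= !eqxx ju !mul0r.
rewrite (sum_ord_supp1 v0d) => [|j /negbTE jv]; last first.
  by do 2!(apply: big1 => ? _); rewrite hU' jv conjC0 mulr0.
rewrite (sum_ord_supp1 v1d) => [|j /negbTE jv]; last first.
  by apply: big1 => ? _; rewrite hU' /= eqxx jv conjC0 mulr0.
rewrite (sum_ord_supp1 v2d) => [|j /negbTE jv]; last first.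
  by rewrite hU' /= !eqxx jv conjC0 mulr0.
by rewrite hU hU' /= !eqxx.
Qed.

Lemma gateA_row a b t : (a < d)%N -> (b < d)%N -> (t < d)%N -> forall y0 y1 y2 : 'I_d,
  gateA R d a b t y0 y1 y2 =
  if [&& (y0 == a :> nat), (y1 == b :> nat) & (y2 == (t + (d - a)) %% d :> nat)%N]
  then 1 else 0.
Proof.
move=> ad bd td y0 y1 y2; rewrite /gateA /inr ad bd td !ltn_ord /= (eq_sym a) (eq_sym b).
case: (eqVneq (y0 : nat) a) => [->|] //=.
rewrite [(y2 : nat) == _]eq_sym eq_modnDsub ?ltn_ord ?(ltnW ad) // addnC.
by case: ifP.
Qed.

Lemma gateB_row0 a b : (a < d)%N -> (b < d)%N -> forall y0 y1 y2 : 'I_d,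
  gateB R d a b 0 y0 y1 y2 =
  if [&& (y0 == a :> nat), (y1 == b :> nat) & (y2 == b :> nat)] then 1 else 0.
Proof.
move=> ad bd y0 y1 y2; rewrite /gateB /inr ad bd d_gt0 !ltn_ord /= (eq_sym a) (eq_sym b).
case: (eqVneq (y1 : nat) b) => [->|]; rewrite ?andbF //=.
rewrite [(0 == _)%N]eq_sym eq_modnDsub ?ltn_ord ?(ltnW bd) // add0n modn_small //.
by rewrite andbT; case: ifP.
Qed.

Lemma onT_pauli_row m n a b t :
  (a < d)%N -> (b < d)%N -> (t < d)%N -> (n <= d)%N -> forall y0 y1 y2 : 'I_d,
  onT d (pauli R d n m) a b t y0 y1 y2 =
  if [&& (y0 == a :> nat), (y1 == b :> nat) & (y2 == (t + (d - n)) %% d :> nat)%N]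
  then om ^+ (t * m) else 0.
Proof.
move=> ad bd td nd y0 y1 y2.
rewrite /onT pauliE // /inr ad bd !ltn_ord /= (eq_sym a) (eq_sym b) [(y2 : nat) == _]eq_sym.
by case: (y0 == a :> nat); case: (y1 == b :> nat); rewrite /= ?mul0r ?mul1r //; case: ifP.
Qed.

Definition tau (p : nat -> nat -> R) (rho : op2 R) : op2 R :=
  project0 (conj3 d (gateB R d) (pauli_channelT d p (conj3 d (gateA R d) (attach0 rho)))).

Lemma roundE p rho a b a' b' :
  round d p rho a b a' b' = tau p rho a b a' b' / tr2 d (tau p rho).
Proof. by []. Qed.

Lemma gateA_attach0E (rho : op2 R) a b t a' b' t' :
  (a < d)%N -> (b < d)%N -> (t < d)%N -> (a' < d)%N -> (b' < d)%N -> (t' < d)%N ->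
  conj3 d (gateA R d) (attach0 rho) a b t a' b' t' =
  rho a b a' b' * ((t == a) && (t' == a') : nat)%:R.
Proof.
move=> ad bd td a'd b'd t'd.
rewrite (conj3_monomial _ ad bd (ltn_pmod _ d_gt0) a'd b'd (ltn_pmod _ d_gt0)
  (gateA_row ad bd td) (gateA_row a'd b'd t'd)).
rewrite /attach0 conjC1 mulr1 mul1r.
by rewrite !eq_modnDsub ?(ltnW ad) ?(ltnW a'd) // !add0n !modn_small.
Qed.

Lemma tauE p (rho : op2 R) a b a' b' :
  (a < d)%N -> (b < d)%N -> (a' < d)%N -> (b' < d)%N ->
  tau p rho a b a' b' =
  \sum_(n < d) \sum_(m < d) (p n m)%:C *
    (om ^+ (b * m) * (rho a b a' b' *
       ((b == (a + n) %% d) && (b' == (a' + n) %% d))%N%:R) * (om ^+ (b' * m))^*).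
Proof.
move=> ad bd a'd b'd.
rewrite /tau /project0 (conj3_monomial _ ad bd bd a'd b'd b'd
  (gateB_row0 ad bd) (gateB_row0 a'd b'd)).
rewrite conjC1 mulr1 mul1r /pauli_channelT.
apply: eq_bigr => n _; apply: eq_bigr => m _; congr (_ * _).
have nd : (n <= d)%N by apply: ltnW.
rewrite (conj3_monomial _ ad bd (ltn_pmod _ d_gt0) a'd b'd (ltn_pmod _ d_gt0)
  (onT_pauli_row m ad bd bd nd) (onT_pauli_row m a'd b'd b'd nd)).
by rewrite gateA_attach0E ?ltn_pmod // !eq_modnDsub.
Qed.

(* The Bell index n with b = a + n (mod d). *)
Definition xdiff a b := ((b + (d - a)) %% d)%N.

Lemma xdiff_lt a b : (xdiff a b < d)%N.
Proof. exact: ltn_pmod. Qed.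

Lemma tau_diag p (rho : op2 R) a b : (a < d)%N -> (b < d)%N ->
  tau p rho a b a b = (pX d p (xdiff a b))%:C * rho a b a b.
Proof.
move=> ad bd; have xd := xdiff_lt a b.
rewrite tauE // (sum_ord_supp1 xd) => [|j jn]; last first.
  apply: big1 => m _.
  rewrite andbb addnC -eq_modnDsub ?(ltnW ad) // -/(xdiff a b) eq_sym (negbTE jn).
  by rewrite !(mulr0, mul0r).
rewrite /= andbb addnC -eq_modnDsub ?(ltnW ad) // -/(xdiff a b) eqxx mulr1.
under eq_bigr => m _ do rewrite mulrAC omega_expr_normal mul1r.
by rewrite -mulr_suml /pX rmorph_sum.
Qed.

(* The phases ω^((a-a')m) drop out because only m = 0 carries weight in the row n = 0. *)
Lemma tau_diag0 p (rho : op2 R) a a' : (forall m, (1 <= m < d)%N -> p 0%N m = 0) ->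
  (a < d)%N -> (a' < d)%N ->
  tau p rho a a a' a' = (p 0%N 0%N)%:C * rho a a a' a'.
Proof.
move=> p0 ad a'd; rewrite tauE // (sum_ord_supp1 d_gt0) => [|j jn]; last first.
  apply: big1 => m _.
  by rewrite eq_modnDr_self // (negbTE jn) !(mulr0, mul0r).
rewrite /= (sum_ord_supp1 d_gt0) => [|j jn]; last first.
  by rewrite p0 ?lt0n ?jn ?ltn_ord // mul0r.
by rewrite !addn0 !modn_small // !eqxx !muln0 expr0 conjC1 !mulr1 mul1r.
Qed.

Lemma sum_xdiff (f : nat -> R) a : (a < d)%N ->
  \sum_(b < d) f (xdiff a b) = \sum_(n < d) f n.
Proof.
move=> ad; pose shift (n : 'I_d) := Ordinal (ltn_pmod (n + a) d_gt0).
have shift_inj : injective shift.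
  move=> n n' /(congr1 val) /eqP /=.
  by rewrite eqn_modDr !modn_small // => /eqP /val_inj.
rewrite (reindex_inj shift_inj); apply: eq_bigr => n _.
by congr f; apply/eqP; rewrite eq_modnDsub ?ltn_pmod ?(ltnW ad).
Qed.

Local Notation s := (Num.sqrt (d%:R : R)).

Lemma sqrtd_invM : s^-1 * s^-1 = d%:R^-1.
Proof. by rewrite -invfM -expr2 sqr_sqrtr ?ler0n. Qed.

Lemma bellE n m a b : (a < d)%N -> (b < d)%N ->
  bell R d n m a b = (b == (a + n) %% d)%N%:R * om ^+ (m * a) * (s^-1)%:C.
Proof. by move=> ad bd; rewrite /bell /inr ad bd /= fmorphV. Qed.

Lemma bell00 a b : (a < d)%N -> (b < d)%N ->
  bell R d 0 0 a b = if (b == a)%N then (s^-1)%:C else 0.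
Proof.
move=> ad bd; rewrite bellE // addn0 modn_small // mul0n expr0 mulr1.
by case: eqP; rewrite ?mul1r ?mul0r.
Qed.

Lemma conjC_real (x : R) : (x%:C)^* = x%:C.
Proof. by apply/eqP; simpc. Qed.

Variable p : nat -> nat -> R.
Hypothesis p_ge0 : forall n m, (n < d)%N -> (m < d)%N -> 0 <= p n m.
Hypothesis p_sum1 : \sum_(n < d) \sum_(m < d) p n m = 1.
Hypothesis p0_Z : forall m, (1 <= m < d)%N -> p 0%N m = 0.

Lemma pX_ge0 n : (n < d)%N -> 0 <= pX d p n.
Proof. by move=> nd; apply: sumr_ge0 => m _; apply: p_ge0. Qed.

Lemma pX0 : pX d p 0 = p 0%N 0%N.
Proof.
rewrite /pX (sum_ord_supp1 d_gt0) // => j j0.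
by apply: p0_Z; rewrite lt0n j0 ltn_ord.
Qed.

Definition Znorm N := \sum_(n < d) pX d p n ^+ N.+1.

Lemma Znorm0 : Znorm 0 = 1.
Proof. by rewrite /Znorm; under eq_bigr do rewrite expr1; exact: p_sum1. Qed.

Lemma Znorm_gt0 N : 0 < Znorm N.
Proof.
have pXN_ge0 (n : 'I_d) : true -> 0 <= pX d p n ^+ N.+1 by rewrite exprn_ge0 ?pX_ge0.
rewrite lt_def sumr_ge0 // andbT; apply: contraTneq isT => /(psumr_eq0P pXN_ge0) pXN0.
have : \sum_(n < d) pX d p n = 0.
  by apply: big1 => n _; have /eqP := pXN0 n isT; rewrite expf_eq0 => /andP [_ /eqP].
by rewrite p_sum1 => /eqP; rewrite oner_eq0.
Qed.

(* The diagonal fixes the trace of the next round and the block <a a|rho|a' a'> the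
   fidelity; no other entry is needed. *)
Definition entries_at N (rho : op2 R) :=
  (forall a a', (a < d)%N -> (a' < d)%N ->
     rho a a a' a' = (p 0%N 0%N ^+ N.+1 / (d%:R * Znorm N))%:C) /\
  (forall a b, (a < d)%N -> (b < d)%N ->
     rho a b a b = (pX d p (xdiff a b) ^+ N.+1 / (d%:R * Znorm N))%:C).

Lemma init_state_entries : entries_at 0 (init_state d p).
Proof.
rewrite /entries_at Znorm0 mulr1 !expr1; split=> [a a' ad a'd | a b ad bd]; rewrite /init_state.
  rewrite (sum_ord_supp1 d_gt0) => [|j j0]; last first.
    apply: big1 => m _.
    by rewrite /bell_proj !bellE // eq_modnDr_self // (negbTE j0) !(mulr0, mul0r).
  rewrite /= (sum_ord_supp1 d_gt0) => [|j j0]; last first.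
    by rewrite p0_Z ?lt0n ?j0 ?ltn_ord // mul0r.
  rewrite /bell_proj /= !bell00 // !eqxx conjC_real -!rmorphM.
  by rewrite sqrtd_invM.
have xd := xdiff_lt a b.
rewrite (sum_ord_supp1 xd) => [|j jn]; last first.
  apply: big1 => m _.
  rewrite /bell_proj !bellE // addnC -eq_modnDsub ?(ltnW ad) // -/(xdiff a b) eq_sym.
  by rewrite (negbTE jn) !(mulr0, mul0r).
under eq_bigr => m _ do rewrite /bell_proj !bellE //= addnC -eq_modnDsub ?(ltnW ad) //
  -/(xdiff a b) eqxx mul1r rmorphM /= conjC_real mulrACA omega_expr_normal mul1r
  -rmorphM sqrtd_invM.
by rewrite -mulr_suml -rmorph_sum -rmorphM.
Qed.

Section Round.
Variables (N : nat) (rho : op2 R).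
Hypothesis rho_entries : entries_at N rho.

Lemma tr2_tau : tr2 d (tau p rho) = (Znorm N.+1 / Znorm N)%:C.
Proof.
have [_ rho_diag] := rho_entries.
pose f n := pX d p n ^+ N.+2 / (d%:R * Znorm N).
rewrite /tr2.
under eq_bigr => a _ do under eq_bigr => b _ do
  rewrite tau_diag // rho_diag // -rmorphM mulrA -exprS -/(f (xdiff a b)).
under eq_bigr => a _ do rewrite -rmorph_sum sum_xdiff //.
rewrite -rmorph_sum sumr_const card_ord -mulr_natl /f -mulr_suml; congr (_%:C).
by rewrite [Znorm N.+1]/Znorm; field; rewrite pnatr_eq0 -lt0n d_gt0 gt_eqF ?Znorm_gt0.
Qed.

Lemma round_entries : entries_at N.+1 (round d p rho).
Proof.
have [rho_diag0 rho_diag] := rho_entries.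
have d0 : (d%:R : R) != 0 by rewrite pnatr_eq0 -lt0n.
have [Z0 Z1] := (gt_eqF (Znorm_gt0 N), gt_eqF (Znorm_gt0 N.+1)).
split=> [a a' ad a'd | a b ad bd]; rewrite roundE tr2_tau.
  rewrite tau_diag0 // rho_diag0 // -rmorphM -fmorph_div; congr (_%:C).
  by rewrite [in RHS]exprS; field; rewrite d0 Z0 Z1.
rewrite tau_diag // rho_diag // -rmorphM -fmorph_div; congr (_%:C).
by rewrite [in RHS]exprS; field; rewrite d0 Z0 Z1.
Qed.

End Round.

Lemma state_after_entries N : entries_at N (state_after d p N).
Proof.
elim: N => [|N IHN]; first exact: init_state_entries.
by rewrite /state_after iterS; apply: round_entries.
Qed.

Lemma fidelityE N : fidelity d p N = (p 0%N 0%N ^+ N.+1 / Znorm N)%:C.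
Proof.
have [rho_diag0 _] := state_after_entries N.
rewrite /fidelity.
transitivity (\sum_(a < d) \sum_(a' < d)
    (s^-1)%:C * state_after d p N a a a' a' * (s^-1)%:C).
  apply: eq_bigr => a _; rewrite (sum_ord_supp1 (ltn_ord a)) => [|j ja]; last first.
    by apply: big1 => a' _; apply: big1 => b' _; rewrite bell00 // (negbTE ja) conjC0 !mul0r.
  rewrite /= bell00 // eqxx conjC_real; apply: eq_bigr => a' _.
  rewrite (sum_ord_supp1 (ltn_ord a')) => [|j ja']; last first.
    by rewrite bell00 // (negbTE ja') mulr0.
  by rewrite /= bell00 // eqxx.
under eq_bigr => a _ do under eq_bigr => a' _ do rewrite rho_diag0 // -!rmorphM.
under eq_bigr do rewrite -rmorph_sum; rewrite -rmorph_sum.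
rewrite !sumr_const !card_ord; congr (_%:C).
rewrite -mulrnA -(mulr_natr _ (d * d)) natrM.
have s_gt0 : 0 < s by rewrite sqrtr_gt0 ltr0n.
set t := s in s_gt0 *; rewrite -[d%:R](sqr_sqrtr (ler0n R d)) -/t.
by field; rewrite !gt_eqF ?Znorm_gt0.
Qed.

End Protocol.

Lemma cvg_sumr0 (R : realType) (k : nat) (u : 'I_k -> nat -> R) :
  (forall i, u i n @[n --> \oo] --> 0) -> \sum_(i < k) u i n @[n --> \oo] --> 0.
Proof.
move=> u0; suff : \sum_(i < k) u i n @[n --> \oo] --> \sum_(i < k) (0 : R).
  by rewrite big1_eq.
by apply: cvg_big => //; exact: add_continuous.
Qed.

Lemma dominant_ratio_cvg1 (R : realType) (k : nat) (x : nat -> R) :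
  (1 < k)%N -> (forall i, (i < k)%N -> 0 <= x i) ->
  (x 0%N ^+ n / \sum_(i < k) x i ^+ n @[n --> \oo] --> (1 : R)) <->
  (forall i, (0 < i < k)%N -> x i < x 0%N).
Proof.
case: k => // k k_gt0 x_ge0.
split=> [cvg1 i /andP [i_gt0 ik] | dom].
  rewrite ltNge; apply/negP => x0_le.
  have le_half n : x 0%N ^+ n / \sum_(j < k.+1) x j ^+ n <= 2^-1.
    rewrite (bigD1 ord0) // (bigD1 (Ordinal ik)) /=; last by rewrite -val_eqE /= -lt0n.
    set a := x 0%N ^+ n; set b := x i ^+ n; set c := \sum_(j | _) _.
    have a_ge0 : 0 <= a by rewrite exprn_ge0 ?x_ge0.
    have ab : a <= b by rewrite lerXn2r ?nnegrE ?x_ge0.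
    have c_ge0 : 0 <= c by rewrite sumr_ge0 // => j _; rewrite exprn_ge0 ?x_ge0.
    have [->|D_neq0] := eqVneq (a + (b + c)) 0; first by rewrite invr0 mulr0; lra.
    rewrite ler_pdivrMr; lra.
  have : 1 <= (2^-1 : R) by apply: ler_cvg_to cvg1 (cvg_cst _) _; exact: nearW.
  rewrite invf_ge1 //; lra.
have x0_gt0 : 0 < x 0%N by apply: le_lt_trans (x_ge0 1%N _) (dom 1%N _).
have ratioE n : x 0%N ^+ n / \sum_(i < k.+1) x i ^+ n =
    (1 + \sum_(i < k) (x i.+1 / x 0%N) ^+ n)^-1.
  rewrite big_ord_recl; under [X in _ = (1 + X)^-1]eq_bigr do rewrite expr_div_n.
  rewrite -mulr_suml; set S := \sum_(i < k) _.
  have S_ge0 : 0 <= S by rewrite sumr_ge0 // => i _; rewrite exprn_ge0 ?x_ge0.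
  have x0n_gt0 : 0 < x 0%N ^+ n by rewrite exprn_gt0.
  by field; rewrite !gt_eqF // ltr_wpDr.
under eq_cvg do rewrite ratioE.
suff : (1 + \sum_(i < k) (x i.+1 / x 0%N) ^+ n)^-1 @[n --> \oo] --> (1 + 0 : R)^-1.
  by rewrite addr0 invr1.
apply: cvgV; first by rewrite addr0 oner_neq0.
apply: cvgD; first exact: cvg_cst.
apply: cvg_sumr0 => i; apply: cvg_expr.
have xi_ge0 : 0 <= x i.+1 by apply: x_ge0; rewrite ltnS.
have xi_lt : x i.+1 < x 0%N by apply: dom; rewrite /= ltnS.
by rewrite ger0_norm ?divr_ge0 ?(ltW x0_gt0) // ltr_pdivrMr // mul1r.
Qed.

Theorem proposition2 (R : realType) (d : nat) (p : nat -> nat -> R) :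
  (2 <= d)%N ->
  (forall n m, (n < d)%N -> (m < d)%N -> 0 <= p n m) ->
  \sum_(n < d) \sum_(m < d) p n m = 1 ->
  (forall m, (1 <= m < d)%N -> p 0%N m = 0) ->
  ((fun N => complex.Re (fidelity d p N)) @ \oo --> (1 : R) /\
   (fun N => complex.Im (fidelity d p N)) @ \oo --> (0 : R))
  <->
  (forall n, (1 <= n < d)%N -> pX d p n < p 0%N 0%N).
Proof.
move=> d_gt1 p_ge0 p_sum1 p0_Z; have d_gt0 := ltnW d_gt1.
have fidE := fidelityE d_gt0 p_ge0 p_sum1 p0_Z.
have ReE N : complex.Re (fidelity d p N) = pX d p 0 ^+ N.+1 / Znorm d p N.
  by rewrite fidE (pX0 d_gt0 p0_Z).
have ImE N : complex.Im (fidelity d p N) = 0 by rewrite fidE.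
rewrite (eq_cvg _ _ ReE) (eq_cvg _ _ ImE) -(pX0 d_gt0 p0_Z).
have := dominant_ratio_cvg1 d_gt1 (pX_ge0 p_ge0); rewrite -cvg_shiftS => <-.
split=> [[] // | ratio_cvg]; split=> //; exact: cvg_cst.
Qed.
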